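(* Let $\Gamma(\mathbf{v})$ be a covariance matrix, viewed as an $N\times N$ block matrix with blocks $\Gamma_{\alpha\beta}$, and suppose $\Gamma(\mathbf{v})\in\mathcal{BC}_2$ (block coherence number at most two). Let $S$ be any set of unordered pairs $\{\alpha,\beta\}$ with $\alpha\neq\beta$, and let $\Gamma'$ be obtained from $\Gamma(\mathbf{v})$ by replacing $\Gamma_{\alpha\beta}$ by $-\Gamma_{\alpha\beta}$ and $\Gamma_{\beta\alpha}$ by $-\Gamma_{\beta\alpha}$ for every $\{\alpha,\beta\}\in S$ (all other blocks unchanged). Then $\Gamma'$ is positive semidefinite.
   Context: The covariance matrix of a distribution $p(x_1,\dots,x_N)$ is $\Gamma(\mathbf{v})=E(\mathbf{v}\mathbf{v}^\dagger)-E(\mathbf{v})E(\mathbf{v})^\dagger$, where $\mathbf{v}_{x_1,\dots,x_N}=|x_1\rangle+\dots+|x_N\rangle$ with $|x_n\rangle$ a basis vector of $\mathcal{V}_n$, the spaces $\mathcal{V}_1,\dots,\mathcal{V}_N$ mutually orthogonal, $E(\mathbf{v}\mathbf{v}^\dagger)=\sum_x\mathbf{v}_x\mathbf{v}_x^\dagger p(x)$, $E(\mathbf{v})=\sum_x\mathbf{v}_xp(x)$; block $\Gamma_{\alpha\beta}=P_\alpha\Gamma P_\beta$ where $P_n$ is the orthogonal projector onto $\mathcal{V}_n$. $\mathcal{BC}_2$ is the set of all finite sums of operators $|\psi\rangle\langle\psi|$ where $|\psi\rangle$ has at most two nonzero components $P_n|\psi\rangle$. *)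

From HB Require Import structures.
From mathcomp Require Import all_boot all_order all_algebra all_field.
Set Implicit Arguments. Unset Strict Implicit. Unset Printing Implicit Defensive.
Import Order.TTheory GRing.Theory Num.Theory.
Local Open Scope ring_scope.

(* Spaces V_1..V_N (indexed by 'I_N), V_n of dimension d n.  The direct sum
   V_1 (+) ... (+) V_N has orthonormal basis indexed by
   bidx d = {n : 'I_N & 'I_(d n)}; the block of an index k is tag k.
   Matrices on the direct sum are functions bidx d -> bidx d -> algC. *)
Definition bidx (N : nat) (d : 'I_N -> nat) := {n : 'I_N & 'I_(d n)}.

(* Outcomes x = (x_1, ..., x_N) with x_n a basis label of V_n. *)
Definition outcome (N : nat) (d : 'I_N -> nat) := {dffun forall n : 'I_N, 'I_(d n)}.

(* v_x = |x_1> + ... + |x_N> *)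
Definition vvec N (d : 'I_N -> nat) (x : outcome d) (k : bidx d) : algC :=
  if x (tag k) == tagged k then 1 else 0.

Definition is_distribution N (d : 'I_N -> nat) (p : outcome d -> algC) :=
  (forall x, 0 <= p x) /\ \sum_x p x = 1.

Definition Evv N (d : 'I_N -> nat) (p : outcome d -> algC) (k l : bidx d) : algC :=
  \sum_x vvec x k * (vvec x l)^* * p x.

Definition Ev N (d : 'I_N -> nat) (p : outcome d -> algC) (k : bidx d) : algC :=
  \sum_x vvec x k * p x.

Definition covmx N (d : 'I_N -> nat) (p : outcome d -> algC) (k l : bidx d) : algC :=
  Evv p k l - Ev p k * (Ev p l)^*.

Definition two_block N (d : 'I_N -> nat) (psi : bidx d -> algC) :=
  exists a b : 'I_N, forall k : bidx d, tag k != a -> tag k != b -> psi k = 0.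

Definition in_BC2 N (d : 'I_N -> nat) (M : bidx d -> bidx d -> algC) :=
  exists (m : nat) (psi : 'I_m -> bidx d -> algC),
    (forall i, two_block (psi i)) /\
    forall k l, M k l = \sum_(i < m) psi i k * (psi i l)^*.

Definition flip_blocks N (d : 'I_N -> nat) (S : {set {set 'I_N}})
  (M : bidx d -> bidx d -> algC) (k l : bidx d) : algC :=
  if [set tag k; tag l] \in S then - M k l else M k l.

Definition psd N (d : 'I_N -> nat) (M : bidx d -> bidx d -> algC) :=
  forall u : bidx d -> algC, 0 <= \sum_k \sum_l (u k)^* * M k l * u l.

From HB Require Import structures.
From mathcomp Require Import all_boot all_order all_algebra all_field.
Set Implicit Arguments.
Unset Strict Implicit.
Unset Printing Implicit Defensive.

Import Order.TTheory GRing.Theory Num.Theory.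
Local Open Scope ring_scope.

(* Flipping the blocks indexed by S preserves BC_2: a term |psi><psi| with psi
   supported on blocks a and b becomes |phi><phi|, where phi is psi with its
   b-component negated when {a, b} is in S and psi otherwise.  Every element
   of BC_2 is a sum of positive rank-one terms, hence positive semidefinite. *)

Lemma set2_in_pairs_addb (T : finType) (S : {set {set T}}) (a b x y : T) :
  (forall e, e \in S -> #|e| = 2%N) ->
  x \in [set a; b] -> y \in [set a; b] ->
  ([set x; y] \in S) =
    (([set a; b] \in S) && (x == b)) (+) (([set a; b] \in S) && (y == b)).
Proof.
move=> S_pairs xab yab.
have [<-|neq_xy] := eqVneq x y.
  by rewrite addbb setUid; apply/negP => /S_pairs; rewrite cards1.
move: xab yab neq_xy; rewrite !inE => /orP[]/eqP-> /orP[]/eqP->; rewrite ?eqxx //.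
- by move=> /negbTE->; rewrite andbF andbT.
- by rewrite eq_sym => /negbTE->; rewrite andbF andbT addbF setUC.
Qed.

Section BlockFlips.

Variables (N : nat) (d : 'I_N -> nat).

Definition outer (psi : bidx d -> algC) (k l : bidx d) : algC := psi k * (psi l)^*.

Lemma flip_blocksE (S : {set {set 'I_N}}) (M : bidx d -> bidx d -> algC) k l :
  flip_blocks S M k l = (-1) ^+ ([set tag k; tag l] \in S) * M k l.
Proof. by rewrite /flip_blocks; case: ifP; rewrite ?mulN1r ?mul1r. Qed.

Variable S : {set {set 'I_N}}.
Hypothesis S_pairs : forall e, e \in S -> #|e| = 2%N.

Lemma flip_blocks_outer (psi : bidx d -> algC) :
  two_block psi ->
  exists2 phi, two_block phi & flip_blocks S (outer psi) =2 outer phi.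
Proof.
case=> a [b psi_ab].
pose s (k : bidx d) := ([set a; b] \in S) && (tag k == b).
exists (fun k => (-1) ^+ s k * psi k).
  by exists a, b => k ka kb; rewrite psi_ab ?mulr0.
move=> k l; rewrite flip_blocksE /outer rmorphM /= rmorph_sign mulrACA -signr_addb.
have in_ab (j : bidx d) : psi j != 0 -> tag j \in [set a; b].
  by apply: contraR; rewrite !inE negb_or => /andP[ja jb]; rewrite psi_ab.
have [->|psi_k] := eqVneq (psi k) 0; first by rewrite !(mul0r, mulr0).
have [->|psi_l] := eqVneq (psi l) 0; first by rewrite conjC0 !(mul0r, mulr0).
by rewrite (set2_in_pairs_addb S_pairs (in_ab k psi_k) (in_ab l psi_l)).
Qed.

Lemma in_BC2_flip_blocks (M : bidx d -> bidx d -> algC) :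
  in_BC2 M -> in_BC2 (flip_blocks S M).
Proof.
case=> m [psi [psi_two M_psi]].
have /fin_all_exists[phi phiP] (i : 'I_m) :
    exists phi, two_block phi /\ flip_blocks S (outer (psi i)) =2 outer phi.
  by have [phi ? ?] := flip_blocks_outer (psi_two i); exists phi.
exists m, phi; split=> [i | k l]; first by case: (phiP i).
rewrite flip_blocksE M_psi mulr_sumr; apply: eq_bigr => i _.
by case: (phiP i) => _ /(_ k l); rewrite flip_blocksE => ->.
Qed.

End BlockFlips.

Lemma in_BC2_psd N (d : 'I_N -> nat) (M : bidx d -> bidx d -> algC) :
  in_BC2 M -> psd M.
Proof.
case=> m [psi [_ M_psi]] u.
pose c i := \sum_k (u k)^* * psi i k.
suff -> : \sum_k \sum_l (u k)^* * M k l * u l = \sum_i c i * (c i)^*.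
  by apply: sumr_ge0 => i _; apply: mul_conjC_ge0.
symmetry; transitivity (\sum_i \sum_k \sum_l (u k)^* * outer (psi i) k l * u l).
  apply: eq_bigr => i _; rewrite rmorph_sum mulr_suml; apply: eq_bigr => k _.
  rewrite mulr_sumr; apply: eq_bigr => l _.
  by rewrite rmorphM /= conjCK /outer -!mulrA [u l * _]mulrC.
rewrite exchange_big; apply: eq_bigr => k _.
rewrite exchange_big; apply: eq_bigr => l _.
by rewrite M_psi mulr_sumr mulr_suml.
Qed.

Theorem mainTheorem4 (N : nat) (d : 'I_N -> nat) (p : outcome d -> algC)
  (S : {set {set 'I_N}}) :
  is_distribution p ->
  in_BC2 (covmx p) ->
  (forall e, e \in S -> #|e| = 2%N) ->
  psd (flip_blocks S (covmx p)).
Proof.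
move=> _ BC2_cov S_pairs.
exact: in_BC2_psd (in_BC2_flip_blocks S_pairs BC2_cov).
Qed.
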